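(* Let $f:\{0,1\}^N\to\{0,1\}$ be a non-constant total function. Then there is a promise $P\subseteq\{0,1\}^N$ such that \[\R(f|_P)=1,\qquad \R_0(f|_P)\ge\frac{\R_0(f)^{1/3}}{6}.\]
   Context: $f|_P$ is the restriction of $f$ to $P$ (a partial function). $\R$ is bounded-error (error at most $1/3$) randomized query complexity and $\R_0$ zero-error randomized query complexity (maximum over inputs in the domain of the expected number of queries); algorithms need only be correct on the domain. *)

From HB Require Import structures.
From mathcomp Require Import all_boot all_order all_algebra.
From mathcomp Require Import boolp classical_sets reals exp Rstruct.
Set Implicit Arguments. Unset Strict Implicit. Unset Printing Implicit Defensive.
Import Order.TTheory GRing.Theory Num.Theory.
Local Open Scope ring_scope.
Notation R := Rdefinitions.R.

Definition input (N : nat) := {ffun 'I_N -> bool}.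

Inductive dtree (N : nat) : Type :=
| Leaf of bool
| Node of 'I_N & dtree N & dtree N.  (* Node i t0 t1 : query x_i, go to t0 if 0, t1 if 1 *)
Arguments Leaf {N}.

Fixpoint dt_eval N (t : dtree N) (x : input N) : bool :=
  match t with
  | Leaf b => b
  | Node i t0 t1 => if x i then dt_eval t1 x else dt_eval t0 x
  end.

Fixpoint dt_cost N (t : dtree N) (x : input N) : nat :=
  match t with
  | Leaf _ => 0
  | Node i t0 t1 => (if x i then dt_cost t1 x else dt_cost t0 x).+1
  end.

(* A randomized decision tree: a finitely supported probability distribution
   over deterministic decision trees, given as a list of (weight, tree). *)
Definition rdtree (N : nat) := seq (R * dtree N).

Definition is_distr N (A : rdtree N) : Prop :=
  (forall p, List.In p A -> 0 <= p.1) /\ \sum_(p <- A) p.1 = 1.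

Definition prob_out N (A : rdtree N) (x : input N) (b : bool) : R :=
  \sum_(p <- A) p.1 * ((dt_eval p.2 x == b) : nat)%:R.

Definition exp_cost N (A : rdtree N) (x : input N) : R :=
  \sum_(p <- A) p.1 * (dt_cost p.2 x)%:R.

Definition worst_cost N (P : {set input N}) (A : rdtree N) : nat :=
  \big[maxn/0%N]_(p <- A | 0 < p.1) \big[maxn/0%N]_(x in P) dt_cost p.2 x.

Definition worst_exp_cost N (P : {set input N}) (A : rdtree N) : R :=
  \big[Num.max/0]_(x in P) exp_cost A x.

Definition bounded_error N (f : input N -> bool) (P : {set input N}) (A : rdtree N) :=
  forall x, x \in P -> prob_out A x (f x) >= 2 / 3.

Definition zero_error N (f : input N -> bool) (P : {set input N}) (A : rdtree N) :=
  forall x, x \in P -> prob_out A x (f x) = 1.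

Definition Rq N (f : input N -> bool) (P : {set input N}) : R :=
  inf [set r : R | exists A : rdtree N,
         [/\ is_distr A, bounded_error f P A & r = (worst_cost P A)%:R]].

Definition R0q N (f : input N -> bool) (P : {set input N}) : R :=
  inf [set r : R | exists A : rdtree N,
         [/\ is_distr A, zero_error f P A & r = worst_exp_cost P A]].

From mathcomp Require Import all_boot all_order all_algebra zify lra.
From mathcomp Require Import Rstruct.
From mathcomp Require reals.
Import Order.TTheory GRing.Theory Num.Theory.
Set Implicit Arguments. Unset Strict Implicit. Unset Printing Implicit Defensive.

(* Let k = bs(f). A certificate for y is the union of a maximal disjoint family of
   minimal sensitive blocks of y, each of size at most k; querying certificates of
   1-inputs until the answers fix f gives D(f) <= k^3, hence R_0(f)^(1/3) <= k.
   It remains to find P with R(f|_P) = 1 and R_0(f|_P) >= a := ceil(k/6).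
   For a disjoint family G of blocks and sets T of at least 2/3 of them flipping f(z),
   the promise {z} u {z^T} is decided with error 1/3 by one query to a random
   representative of a block of G, while a zero-error algorithm must query on z a
   point in a block of every T.  Take x with k disjoint sensitive blocks F.  Either
   every set of fewer than a blocks of F is avoided by such a T, or some small Q0
   meets every large T flipping f(x); then at z = x^i for a block i outside Q0 the
   large subfamilies of F \ i avoiding Q0 all flip f(z), and fewer than a blocks
   cannot meet all of them. *)

Section Flip.
Variable N : nat.
Implicit Types (x y : input N) (A B : {set 'I_N}).

Definition flip x A : input N := [ffun p => x p (+) (p \in A)].

Lemma flipE x A p : flip x A p = x p (+) (p \in A).
Proof. by rewrite ffunE. Qed.

Lemma flip0 x : flip x set0 = x.
Proof. by apply/ffunP=> p; rewrite flipE in_set0 addbF. Qed.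

Lemma flipK A : involutive (flip^~ A).
Proof. by move=> x; apply/ffunP=> p; rewrite !flipE -addbA addbb addbF. Qed.

Lemma flipU x A B : [disjoint A & B] -> flip (flip x A) B = flip x (A :|: B).
Proof.
move=> dAB; apply/ffunP=> p; rewrite !flipE in_setU -addbA; congr (_ (+) _).
by case pA: (p \in A); rewrite ?(disjointFr dAB pA).
Qed.

Lemma flip_diff x y : flip x [set p | x p != y p] = y.
Proof. by apply/ffunP=> p; rewrite flipE inE; case: (x p); case: (y p). Qed.

Lemma flip_neq x A p : (flip x A p != x p) = (p \in A).
Proof. by rewrite flipE; case: (x p); case: (p \in A). Qed.

End Flip.

Section TrivIset.
Variable T : finType.
Implicit Types (P : {set {set T}}) (D : {set T}).

Lemma trivIset_leq_card P D :
  trivIset P -> {in P, forall B, B :&: D != set0} -> (#|P| <= #|D|)%N.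
Proof.
move=> tP meetD; have [->|[B0 B0P]] := set_0Vmem P; first by rewrite cards0.
have [p0 _] := set0Pn _ (meetD B0 B0P).
pose c B := odflt p0 [pick p in B :&: D].
have cP B : B \in P -> c B \in B :&: D.
  by move/meetD/set0Pn=> [p pB]; rewrite /c; case: pickP => // /(_ p); rewrite pB.
have c_inj : {in P &, injective c}.
  move=> B B' BP B'P eqc; apply/eqP/negPn/negP => /(trivIsetP tP B B' BP B'P).
  by move/disjointFr/(_ (setIP (cP B BP)).1); rewrite eqc (setIP (cP B' B'P)).1.
rewrite -(card_in_imset c_inj); apply/subset_leq_card/subsetP=> _ /imsetP[B BP ->].
exact: (setIP (cP B BP)).2.
Qed.

Lemma exists_transversal P : set0 \notin P ->
  exists2 S : {set T}, (#|S| <= #|P|)%N & {in P, forall B, B :&: S != set0}.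
Proof.
move=> P0; have [->|[B0 B0P]] := set_0Vmem P.
  by exists set0 => [|B]; rewrite ?cards0 ?in_set0.
have [p0 _] : exists p, p \in B0 by apply/set0Pn; apply: contraNneq P0 => <-.
pose c (B : {set T}) := odflt p0 [pick p in B].
exists (c @: P); first exact: leq_imset_card.
move=> B BP; apply/set0Pn; exists (c B); rewrite inE imset_f // andbT /c.
have [p pB] : exists p, p \in B by apply/set0Pn; apply: contraNneq P0 => <-.
by case: pickP => // /(_ p); rewrite pB.
Qed.

End TrivIset.

Section BlockSensitivity.
Variables (N : nat) (f : input N -> bool).
Implicit Types (x y : input N) (B S : {set 'I_N}) (F : {set {set 'I_N}}).

Definition sensitive x B := f (flip x B) != f x.

Definition sensitive_family x F := trivIset F && [forall B in F, sensitive x B].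

Definition bs := \max_(xF | sensitive_family xF.1 xF.2) #|xF.2|.

Lemma sensitive_neq0 x B : sensitive x B -> B != set0.
Proof. by apply: contraNneq => ->; rewrite /sensitive flip0 eqxx. Qed.

Lemma sensitive_family0 x : sensitive_family x set0.
Proof. by apply/andP; split; [apply/trivIsetP|apply/forall_inP] => B; rewrite inE. Qed.

Lemma sensitive_familyP x F :
  sensitive_family x F ->
  [/\ trivIset F, {in F, forall B, sensitive x B} & set0 \notin F].
Proof.
case/andP=> tF /forall_inP sF; split=> //.
by apply/negP=> /sF/sensitive_neq0; rewrite eqxx.
Qed.

Lemma leq_card_bs x F : sensitive_family x F -> (#|F| <= bs)%N.
Proof. by move=> sF; apply: (leq_bigmax_cond (x, F)). Qed.

Lemma sensitive_familyU1 x F B :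
  sensitive_family x F -> sensitive x B -> [disjoint B & cover F] ->
  sensitive_family x (B |: F) /\ #|B |: F| = #|F|.+1.
Proof.
case/sensitive_familyP=> tF sF F0 sB /bigcup_disjointP dBF.
have [tBF BnF] := trivIsetU1 dBF tF F0; rewrite cardsU1 BnF; split=> //.
by apply/andP; split=> //; apply/forall_inP=> C /setU1P[->|/sF].
Qed.

Lemma bs_attained : exists x F, sensitive_family x F /\ #|F| = bs.
Proof.
have s0 := sensitive_family0 [ffun=> false].
case: (@arg_maxnP _ ([ffun=> false], set0) [pred xF | sensitive_family xF.1 xF.2]
                  (fun xF => #|xF.2|) s0) => -[x F] /= sF maxF.
exists x, F; split=> //; apply/eqP; rewrite eqn_leq (leq_card_bs sF) /=.
by apply/bigmax_leqP=> -[y G]; apply: maxF.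
Qed.

Lemma bs_gt0 : (exists x y, f x != f y) -> (0 < bs)%N.
Proof.
move=> [x [y fxy]]; rewrite -(cards1 [set p | x p != y p]).
apply: (@leq_card_bs x).
rewrite /sensitive_family trivIset1; apply/forall_inP=> B /set1P->.
by rewrite /sensitive flip_diff eq_sym.
Qed.

Definition minimal_sensitive y B :=
  sensitive y B && [forall B' : {set 'I_N}, (B' \proper B) ==> ~~ sensitive y B'].

(* Every single bit of a minimal sensitive block B of y is sensitive at y^B. *)
Lemma minimal_sensitive_card y B : minimal_sensitive y B -> (#|B| <= bs)%N.
Proof.
case/andP=> sB /forall_inP minB.
rewrite -(card_imset _ set1_inj); apply: (@leq_card_bs (flip y B)).
apply/andP; split.
  apply/trivIsetP=> _ _ /imsetP[p _ ->] /imsetP[q _ ->] neq.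
  by rewrite disjoints1 inE; apply: contraNneq neq => ->.
apply/forall_inP=> _ /imsetP[p pB ->].
have dB : [disjoint B :\ p & [set p]] by rewrite disjoint_sym disjoints1 !inE eqxx.
have eq_flip : flip (flip y B) [set p] = flip y (B :\ p).
  by rewrite -{1}(setD1K pB) setUC -flipU // flipK.
have := minB _ (properD1 pB); rewrite /sensitive eq_flip negbK => /eqP->.
by rewrite eq_sym.
Qed.

Lemma exists_minimal_sensitive y S :
  sensitive y S -> exists2 B : {set 'I_N}, B \subset S & minimal_sensitive y B.
Proof.
move=> sS; have PS : (S \subset S) && sensitive y S by rewrite subxx.
case: (@arg_minnP _ S [pred B : {set 'I_N} | (B \subset S) && sensitive y B]
                  (fun B => #|B|) PS) => B /andP[BS sB] minB.
exists B => //; rewrite /minimal_sensitive sB.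
apply/forall_inP=> B' ltB'B; apply/negP=> sB'.
have := minB B'; rewrite /= sB' (subset_trans (proper_sub ltB'B) BS) => /(_ isT).
by rewrite leqNgt proper_card.
Qed.

Definition certificate y S := forall y', {in S, y' =1 y} -> f y' = f y.

Definition minimal_family y F := trivIset F && [forall B in F, minimal_sensitive y B].

Definition cert y := cover [arg max_(F > set0 | minimal_family y F) #|F|].

Lemma cert_spec y : certificate y (cert y) /\ (#|cert y| <= bs * bs)%N.
Proof.
have m0 : minimal_family y set0.
  by apply/andP; split; [apply/trivIsetP|apply/forall_inP] => B; rewrite inE.
rewrite /cert; case: arg_maxnP => // F /andP[tF /forall_inP mF] maxF.
have sF : sensitive_family y F.
  by apply/andP; split=> //; apply/forall_inP=> B /mF/andP[].
split.
  move=> y' agree; apply/eqP; apply: contraT => fy'.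
  have sD : sensitive y [set p | y p != y' p] by rewrite /sensitive flip_diff.
  have [B BD mB] := exists_minimal_sensitive sD.
  have dB : [disjoint B & cover F].
    rewrite disjoints_subset; apply/subsetP=> p /(subsetP BD).
    by rewrite !inE; apply: contra => /agree->.
  have [sBF cBF] := sensitive_familyU1 sF (proj1 (andP mB)) dB.
  have : minimal_family y (B |: F).
    by rewrite /minimal_family (proj1 (andP sBF)); apply/forall_inP=> C /setU1P[->|/mF].
  by move/maxF; rewrite /= cBF ltnn.
apply: leq_trans (leq_card_cover F).1 _.
apply: (@leq_trans (\sum_(B in F) bs)).
  by apply: leq_sum => B /mF/minimal_sensitive_card.
by rewrite sum_nat_const leq_mul2r (leq_card_bs sF) orbT.
Qed.

End BlockSensitivity.

Section QuerySequence.
Variable N : nat.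
Implicit Types (x : input N) (Y : {set input N}) (s : seq 'I_N).

Definition refine Y x s := [set y in Y | all (fun p => y p == x p) s].

Fixpoint query_seq (cont : {set input N} -> dtree N) s Y : dtree N :=
  if s is p :: s' then
    Node p (query_seq cont s' [set y in Y | y p == false])
           (query_seq cont s' [set y in Y | y p == true])
  else cont Y.

Lemma query_seqE cont s Y x :
  dt_eval (query_seq cont s Y) x = dt_eval (cont (refine Y x s)) x /\
  dt_cost (query_seq cont s Y) x = (size s + dt_cost (cont (refine Y x s)) x)%N.
Proof.
elim: s Y => [|p s IH] Y /=.
  by have -> : refine Y x [::] = Y by apply/setP=> y; rewrite inE andbT.
have -> : refine Y x (p :: s) = refine [set y in Y | y p == x p] x s.
  by apply/setP=> y; rewrite !inE andbA.
by case: (x p) (IH [set y in Y | y p == x p]) => -[-> ->].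
Qed.

Lemma mem_refine Y x s : x \in Y -> x \in refine Y x s.
Proof. by move=> xY; rewrite inE xY; apply/allP=> p _. Qed.

End QuerySequence.

Section CertificateTree.
Variables (N : nat) (f : input N -> bool).
Implicit Types (x y z : input N) (Y : {set input N}).

(* [Y] is the set of inputs consistent with the answers so far. *)
Fixpoint cert_tree (n : nat) Y : dtree N :=
  if [pick y in Y | f y] is Some y then
    if n is n'.+1 then
      if [exists z in Y, ~~ f z] then query_seq (cert_tree n') (enum (cert f y)) Y
      else Leaf true
    else Leaf true
  else Leaf false.

Definition blocks_fixed (n : nat) Y := forall z, z \in Y -> f z = false ->
  exists F, [/\ sensitive_family f z F, {in Y, forall w : input N, {in cover F, w =1 z}}
              & (bs f <= #|F| + n)%N].

Lemma certificate_extend Y y z S F :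
  y \in Y -> z \in Y -> f y -> f z = false -> certificate f y S ->
  sensitive_family f z F -> {in Y, forall w : input N, {in cover F, w =1 z}} ->
  let B := [set p in S | z p != y p] in
  sensitive_family f z (B |: F) /\ #|B |: F| = #|F|.+1.
Proof.
move=> yY zY fy fz cS sF fixF B; apply: sensitive_familyU1 => //.
  rewrite /sensitive (cS (flip z B)) ?fy ?fz // => p pS.
  by rewrite flipE !inE pS; case: (z p); case: (y p).
rewrite disjoint_sym disjoints_subset; apply/subsetP=> p pF.
by rewrite !inE (fixF y yY p pF) eqxx andbF.
Qed.

Lemma blocks_fixed_gt0 n Y y z :
  blocks_fixed n Y -> y \in Y -> z \in Y -> f y -> f z = false -> (0 < n)%N.
Proof.
move=> inv yY zY fy fz; have [F [sF fixF bsF]] := inv z zY fz.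
have certT : certificate f y setT.
  by move=> y' agree; congr f; apply/ffunP=> p; apply: agree; rewrite inE.
have [/leq_card_bs] := certificate_extend yY zY fy fz certT sF fixF.
by move=> /[swap] ->; lia.
Qed.

Lemma blocks_fixed_refine n Y x y :
  blocks_fixed n.+1 Y -> y \in Y -> f y -> blocks_fixed n (refine Y x (enum (cert f y))).
Proof.
move=> inv yY fy z /setIdP[zY /allP zS] fz.
have [F [sF fixF bsF]] := inv z zY fz.
have [cS _] := cert_spec f y.
have [sBF cBF] := certificate_extend yY zY fy fz cS sF fixF.
exists ([set p in cert f y | z p != y p] |: F); split=> //; last by rewrite cBF addSnnS.
move=> w /setIdP[wY /allP wS] p /bigcupP[C /setU1P[->|CF] pC]; last first.
  by apply: fixF => //; apply/bigcupP; exists C.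
have pS : p \in enum (cert f y) by rewrite mem_enum; case/setIdP: pC.
by rewrite (eqP (wS p pS)) (eqP (zS p pS)).
Qed.

Lemma cert_treeP n Y x : x \in Y -> blocks_fixed n Y ->
  dt_eval (cert_tree n Y) x = f x /\ (dt_cost (cert_tree n Y) x <= n * (bs f * bs f))%N.
Proof.
elim: n Y => [|n IH] Y xY inv /=;
  (case: pickP => [y /andP[yY fy]|/(_ x)]; last by rewrite xY => /= ->).
  by case fx: (f x) => //; have := blocks_fixed_gt0 inv yY xY fy fx.
case: ifP => [_|/exists_inPn/(_ x xY)/negbNE-> //].
have [-> ->] := query_seqE (cert_tree n) (enum (cert f y)) Y x.
have [-> costIH] := IH _ (mem_refine _ xY) (blocks_fixed_refine inv yY fy).
by rewrite -cardE mulSn leq_add // (cert_spec f y).2.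
Qed.

Definition bs_tree := cert_tree (bs f) setT.

Lemma bs_treeP x : dt_eval bs_tree x = f x /\ (dt_cost bs_tree x <= bs f ^ 3)%N.
Proof.
rewrite expnS expnS expn1; apply: cert_treeP; rewrite ?inE // => z _ _.
exists set0; split; [exact: sensitive_family0| |by rewrite cards0].
by move=> w _ p; rewrite /cover big_set0 inE.
Qed.

End CertificateTree.

Local Open Scope ring_scope.

Section SumsOverLists.
Variables (K : numDomainType) (T : Type).
Implicit Types (A : seq T) (F G : T -> K).

Lemma ler_sum_In A F G :
  (forall p, List.In p A -> F p <= G p) -> \sum_(p <- A) F p <= \sum_(p <- A) G p.
Proof.
elim: A => [|a A IH] leFG; first by rewrite !big_nil.
by rewrite !big_cons lerD ?leFG ?IH //; [left | move=> p Ap; apply: leFG; right].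
Qed.

Lemma eq_sum_In A F G :
  (forall p, List.In p A -> F p = G p) -> \sum_(p <- A) F p = \sum_(p <- A) G p.
Proof.
by move=> eqFG; apply/le_anti/andP; split; apply: ler_sum_In => p /eqFG->.
Qed.

Lemma psumr_In_eq0 A G :
  (forall p, List.In p A -> 0 <= G p) -> \sum_(p <- A) G p = 0 ->
  forall p, List.In p A -> G p = 0.
Proof.
elim: A => [|a A IH] G0 //; rewrite big_cons => /eqP.
have sum0 : 0 <= \sum_(p <- A) G p.
  have := ler_sum_In (F := fun _ => 0) (G := G) (A := A); rewrite big1_eq.
  by apply=> p Ap; apply: G0; right.
rewrite paddr_eq0 ?G0 //=; last by left.
case/andP=> /eqP Ga /eqP GA p [<- // | Ap].
by apply: IH => // q Aq; apply: G0; right.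
Qed.

End SumsOverLists.

Section QueryComplexity.
Variables (N : nat) (f : input N -> bool).
Implicit Types (P : {set input N}) (A : rdtree N) (t : dtree N) (x y z : input N).

Fixpoint queried t x : {set 'I_N} :=
  if t is Node i t0 t1 then i |: queried (if x i then t1 else t0) x else set0.

Lemma card_queried t x : (#|queried t x| <= dt_cost t x)%N.
Proof.
elim: t => [b|i t0 IH0 t1 IH1] /=; first by rewrite cards0.
by rewrite (leq_trans (leq_card_setU _ _)) // cards1 add1n ltnS; case: (x i).
Qed.

Lemma dt_eval_queried t x y : {in queried t x, y =1 x} -> dt_eval t y = dt_eval t x.
Proof.
elim: t => [b|i t0 IH0 t1 IH1] //= agree; rewrite (agree i (setU11 _ _)).
by move: agree; case: (x i) => agree; [apply: IH1 | apply: IH0] => p qp;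
  apply: agree; rewrite setU1r.
Qed.

Definition point_distr t : rdtree N := [:: (1, t)].

Lemma point_distrP t : is_distr (point_distr t).
Proof. by split=> [p [<- | []] | ]; rewrite ?big_cons ?big_nil ?addr0. Qed.

Lemma prob_out_point t x : prob_out (point_distr t) x (dt_eval t x) = 1.
Proof. by rewrite /prob_out big_cons big_nil eqxx mul1r addr0. Qed.

Lemma exp_cost_point t x : exp_cost (point_distr t) x = (dt_cost t x)%:R.
Proof. by rewrite /exp_cost big_cons big_nil mul1r addr0. Qed.

Lemma zero_error_support P A : is_distr A -> zero_error f P A ->
  forall p, List.In p A -> 0 < p.1 -> {in P, forall x, dt_eval p.2 x = f x}.
Proof.
move=> [A_ge0 A_sum1] zeA p Ap p_gt0 x xP.
pose G (q : R * dtree N) := q.1 * (1 - ((dt_eval q.2 x == f x) : nat)%:R).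
have G_ge0 q : List.In q A -> 0 <= G q.
  by move=> Aq; rewrite mulr_ge0 ?A_ge0 //; case: (_ == _); rewrite ?subrr ?subr0.
have G_sum0 : \sum_(q <- A) G q = 0.
  rewrite /G; under eq_bigr do rewrite mulrBr mulr1.
  by rewrite sumrB A_sum1 -/(prob_out A x (f x)) zeA // subrr.
have /eqP := psumr_In_eq0 G_ge0 G_sum0 Ap; rewrite mulf_eq0 gt_eqF //=.
by case: (dt_eval p.2 x =P f x) => //= _; rewrite mulr0n subr0 oner_eq0.
Qed.

Lemma exp_cost_ge A z (h : nat) : is_distr A ->
  (forall p, List.In p A -> 0 < p.1 -> (h <= dt_cost p.2 z)%N) -> h%:R <= exp_cost A z.
Proof.
move=> [A_ge0 A_sum1] hA.
have -> : h%:R = \sum_(p <- A) p.1 * h%:R :> R by rewrite -mulr_suml A_sum1 mul1r.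
apply: ler_sum_In => p Ap; have := A_ge0 p Ap; rewrite le0r => /predU1P[->|p_gt0].
  by rewrite !mul0r.
by apply: ler_wpM2l; [exact: ltW | rewrite ler_nat hA].
Qed.

Lemma worst_exp_cost_ge0 P A : 0 <= worst_exp_cost P A.
Proof.
by rewrite /worst_exp_cost; elim/big_rec: _ => // x c _ c_ge0; rewrite le_max c_ge0 orbT.
Qed.

Lemma worst_exp_cost_ge P A z : z \in P -> exp_cost A z <= worst_exp_cost P A.
Proof. by move=> zP; rewrite /worst_exp_cost (bigD1 z) //= le_max lexx. Qed.

Lemma worst_cost_ge P A p x :
  List.In p A -> 0 < p.1 -> x \in P -> (dt_cost p.2 x <= worst_cost P A)%N.
Proof.
move=> Ap p_gt0 xP; rewrite /worst_cost; elim: A Ap => [|a A IH] //= [->|Ap].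
  by rewrite big_cons p_gt0 leq_max (leq_bigmax_cond x xP).
by rewrite big_cons; case: ifP => _; rewrite ?leq_max IH ?orbT.
Qed.

Lemma R0q_ge P z (h : nat) : z \in P ->
  (forall t, {in P, forall x, dt_eval t x = f x} -> (h <= dt_cost t z)%N) ->
  h%:R <= R0q f P.
Proof.
move=> zP hP; apply: reals.lb_le_inf.
  exists (worst_exp_cost P (point_distr (bs_tree f))), (point_distr (bs_tree f)).
  split; [apply: point_distrP | move=> x _ | by []].
  by rewrite -(bs_treeP f x).1 prob_out_point.
move=> _ [A [dA zeA ->]]; apply: le_trans (worst_exp_cost_ge _ zP).
by apply: exp_cost_ge => // p Ap p_gt0; apply/hP/(zero_error_support dA zeA).
Qed.

Lemma R0q_le_bs : R0q f [set: input N] <= (bs f ^ 3)%:R.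
Proof.
pose A := point_distr (bs_tree f).
apply: (@le_trans _ _ (worst_exp_cost [set: input N] A)).
  apply: reals.ge_inf; first by exists 0 => _ [B [_ _ ->]]; apply: worst_exp_cost_ge0.
  exists A; split; [apply: point_distrP | move=> x _ | by []].
  by rewrite -(bs_treeP f x).1 prob_out_point.
rewrite /worst_exp_cost; elim/big_rec: _ => [|x c _ c_le]; first by rewrite ler0n.
by rewrite ge_max c_le exp_cost_point ler_nat (bs_treeP f x).2.
Qed.

Lemma Rq_le P A : is_distr A -> bounded_error f P A -> Rq f P <= (worst_cost P A)%:R.
Proof.
move=> dA beA; apply: reals.ge_inf; last by exists A.
by exists 0 => _ [B [_ _ ->]]; apply: ler0n.
Qed.

Lemma Rq_ge1 P z w : z \in P -> w \in P -> f z != f w -> 1 <= Rq f P.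
Proof.
move=> zP wP fzw; apply: reals.lb_le_inf.
  exists (worst_cost P (point_distr (bs_tree f)))%:R, (point_distr (bs_tree f)).
  split; [apply: point_distrP | move=> x _ | by []].
  by rewrite -(bs_treeP f x).1 prob_out_point; lra.
move=> _ [A [[A_ge0 A_sum1] beA ->]]; rewrite ler1n lt0n; apply/negP=> /eqP cost0.
have same_out b : prob_out A z b = prob_out A w b.
  apply: eq_sum_In => p Ap; have := A_ge0 p Ap; rewrite le0r => /predU1P[->|p_gt0].
    by rewrite !mul0r.
  suff -> : dt_eval p.2 z = dt_eval p.2 w by [].
  have /eqP q0 : queried p.2 w == set0.
    rewrite -cards_eq0 -leqn0 -cost0.
    exact: leq_trans (card_queried _ _) (worst_cost_ge Ap p_gt0 wP).
  by apply: dt_eval_queried => i; rewrite q0 inE.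
have out_sum b : prob_out A z b + prob_out A z (~~ b) = 1.
  rewrite /prob_out -big_split -[in RHS]A_sum1; apply: eq_bigr => -[c t] _ /=.
  by rewrite -mulrDr; case: (dt_eval t z); case: b; rewrite ?addr0 ?add0r mulr1.
have := beA z zP; have := beA w wP; rewrite -same_out.
have -> : f w = ~~ f z by move: fzw; case: (f z); case: (f w).
by have := out_sum (f z); lra.
Qed.

End QueryComplexity.

Section Promises.
Variables (N : nat) (f : input N -> bool).
Implicit Types (x z w : input N) (S : {set 'I_N}) (G Q T : {set {set 'I_N}}).

Definition probe_tree z (b : bool) (r : 'I_N) : dtree N :=
  Node r (Leaf (b (+) z r)) (Leaf (b (+) ~~ z r)).

Definition probe z b S : rdtree N :=
  [seq ((#|S|%:R)^-1, probe_tree z b r) | r <- enum S].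

Lemma probe_distr z b S : S != set0 -> is_distr (probe z b S).
Proof.
move=> S0; split=> [p /List.in_map_iff[r [<- _]] | ].
  by rewrite invr_ge0 ler0n.
rewrite big_map big_enum /= sumr_const -(mulr_natr (#|S|%:R^-1)) mulVf //.
by rewrite pnatr_eq0 cards_eq0.
Qed.

Lemma prob_out_probe z b S x c : prob_out (probe z b S) x c =
  (#|S|%:R)^-1 * #|[set r in S | b (+) (x r != z r) == c]|%:R.
Proof.
rewrite /prob_out big_map big_enum /= -big_distrr /= -natr_sum; congr (_ * _%:R).
rewrite -sum1_card big_mkcond [RHS]big_mkcond /=; apply: eq_bigr => r _.
by rewrite inE; case: (r \in S); case: (x r); case: (z r); case: b; case: c.
Qed.

Lemma worst_cost_probe z b S P : (worst_cost P (probe z b S) <= 1)%N.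
Proof.
rewrite /worst_cost big_map; elim/big_rec: _ => // r c _ c_le1.
rewrite geq_max c_le1 andbT; elim/big_rec: _ => // y d _ d_le1.
by rewrite geq_max d_le1 andbT /=; case: (y r).
Qed.

Lemma one_query_promise z (W : {set input N}) S (h : nat) :
  W != set0 -> S != set0 ->
  (forall w, w \in W ->
     f w != f z /\ (2 * #|S| <= 3 * #|[set p in S | w p != z p]|)%N) ->
  (forall Q : {set 'I_N}, (forall w, w \in W -> exists2 p, p \in Q & w p != z p) ->
     (h <= #|Q|)%N) ->
  Rq f (z |: W) = 1 /\ h%:R <= R0q f (z |: W).
Proof.
move=> /set0Pn[w0 w0W] S0 farW hitW; split.
  apply/le_anti/andP; split; last first.
    by apply: (Rq_ge1 (setU11 z W) (setU1r z w0W)); rewrite eq_sym (farW w0 w0W).1.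
  apply: le_trans (Rq_le (probe_distr z (f z) S0) _) _; last first.
    by rewrite lern1; apply: worst_cost_probe.
  have S_gt0 : 0 < #|S|%:R :> R by rewrite ltr0n card_gt0.
  move=> x /setU1P[-> | xW]; rewrite prob_out_probe.
    have -> : [set r in S | f z (+) (z r != z r) == f z] = S.
      by apply/setP=> r; rewrite inE eqxx addbF eqxx andbT.
    by rewrite mulVf ?gt_eqF //; lra.
  have [fxz farx] := farW x xW.
  have -> : [set r in S | f z (+) (x r != z r) == f x] = [set p in S | x p != z p].
    apply/setP=> r; move: fxz; rewrite !inE.
    by case: (f x); case: (f z); case: (x r != z r).
  rewrite ler_pdivlMl // mulrC.
  by move: farx; rewrite -(ler_nat R) !natrM; lra.
apply: (R0q_ge (setU11 z W)) => t tP; apply: leq_trans (card_queried t z).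
apply: hitW => w wW; apply/exists_inP; apply: contraT => /exists_inPn agree.
have := (farW w wW).1; rewrite -(tP w (setU1r z wW)) -(tP z (setU11 z W)).
by rewrite (dt_eval_queried (x := z) (y := w)) ?eqxx // => p /agree/negbNE/eqP.
Qed.

Lemma block_promise z G (good : pred {set {set 'I_N}}) (a : nat) :
  (0 < a)%N -> trivIset G -> set0 \notin G ->
  (forall T, good T ->
     [/\ T \subset G, f (flip z (cover T)) != f z & (2 * #|G| <= 3 * #|T|)%N]) ->
  (forall Q, Q \subset G -> (#|Q| < a)%N -> exists2 T, good T & [disjoint T & Q]) ->
  exists P, Rq f P = 1 /\ a%:R <= R0q f P.
Proof.
move=> a_gt0 tG G0 goodP missQ.
have [T0 goodT0 _] := missQ set0 (sub0set G) ltac:(by rewrite cards0).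
have [S SG meetS] := exists_transversal G0.
pose W := [set flip z (cover T) | T in good].
exists (z |: W); apply: (@one_query_promise _ _ S).
- by apply/set0Pn; exists (flip z (cover T0)); apply: imset_f.
- have [T0G fT0 _] := goodP T0 goodT0; have /set0Pn[B0 B0T0] : T0 != set0.
    by apply: contraNneq fT0 => ->; rewrite /cover big_set0 flip0.
  by apply: contraNneq (meetS B0 (subsetP T0G B0 B0T0)) => ->; rewrite setI0.
- move=> _ /imsetP[T goodT ->]; have [TG fT sizeT] := goodP T goodT; split=> //.
  apply: leq_trans (leq_trans _ sizeT) _; first by rewrite leq_mul2l SG orbT.
  rewrite leq_mul2l /=.
  apply: trivIset_leq_card (trivIsetS TG tG) _ => B BT.
  apply: contraNneq (meetS B (subsetP TG B BT)) => BD0; apply/eqP/setP=> p.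
  rewrite !inE; apply/negP=> /andP[pB pS]; move/setP/(_ p): BD0.
  by rewrite !inE pB pS flip_neq /= => /negP; apply; apply/bigcupP; exists B.
move=> Q' hitQ'; pose Q := [set B in G | B :&: Q' != set0].
have QG : Q \subset G by apply/subsetP=> B /setIdP[].
apply: leq_trans (trivIset_leq_card (trivIsetS QG tG) _); last first.
  by move=> B /setIdP[].
rewrite leqNgt; apply/negP=> /(missQ _ QG)[T goodT dTQ].
have [TG _ _] := goodP T goodT.
have [p pQ'] := hitQ' _ (imset_f (fun T => flip z (cover T)) goodT).
rewrite flip_neq => /bigcupP[B BT pB].
have BQ : B \in Q.
  by rewrite inE (subsetP TG B BT); apply/set0Pn; exists p; rewrite inE pB.
by move: (disjointFr dTQ BT); rewrite BQ.
Qed.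

End Promises.

Section BlockSensitivityPromise.
Variables (N : nat) (f : input N -> bool).
Implicit Types (x : input N) (F Q T : {set {set 'I_N}}).

Lemma flipped_block_promise x F i Q0 (a : nat) :
  sensitive_family f x F -> i \in F -> i \notin Q0 -> (#|Q0| < a)%N ->
  (6 * a <= #|F| + 5)%N ->
  (forall T, T \subset F -> (2 * #|F| <= 3 * #|T|)%N -> [disjoint T & Q0] ->
     f (flip x (cover T)) = f x) ->
  exists P, Rq f P = 1 /\ a%:R <= R0q f P.
Proof.
move=> sF iF iQ0 Q0a aF insensitive; have [tF sensF F0] := sensitive_familyP sF.
have cardFi : #|F| = #|F :\ i|.+1 by rewrite (cardsD1 i F) iF.
pose good T := [&& T \subset F :\ i, [disjoint T & Q0] & (2 * #|F :\ i| <= 3 * #|T|)%N].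
apply: (@block_promise _ f (flip x i) (F :\ i) good).
- exact: leq_ltn_trans (leq0n _) Q0a.
- exact: trivIsetS (subD1set F i) tF.
- by rewrite !inE negb_and F0 orbT.
- move=> T /and3P[TFi dTQ0 sizeT]; split=> //.
  have iT : i \notin T.
    by apply: contraTN TFi => iT; apply/subsetPn; exists i; rewrite ?inE ?eqxx.
  have di : [disjoint i & cover T].
    apply/bigcup_disjointP=> B /(subsetP TFi) /setD1P[Bi BF].
    by apply: (trivIsetP tF) => //; rewrite eq_sym.
  rewrite flipU // -[i :|: _]big_setU1 //= insensitive.
  - by rewrite eq_sym; apply: sensF.
  - by apply/subsetP=> B /setU1P[-> // | /(subsetP TFi)/setD1P[]].
  - by rewrite cardsU1 iT; move: sizeT; rewrite cardFi; lia.
  - rewrite disjoint_sym disjoints_subset; apply/subsetP=> B BQ0; rewrite !inE.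
    by rewrite (disjointFl dTQ0 BQ0) orbF; apply: contraNneq iQ0 => <-.
move=> Q QFi Qa; exists ((F :\ i) :\: (Q :|: Q0)).
  rewrite /good subsetDl /=; apply/andP; split.
    rewrite disjoint_sym disjoints_subset.
    by apply/subsetP=> B BQ0; rewrite !inE BQ0 orbT.
  rewrite [#|_ :\: (Q :|: Q0)|]cardsD.
  have := subset_leq_card (subsetIr (F :\ i) (Q :|: Q0)).
  move: (leq_card_setU Q Q0).1 aF Q0a Qa; rewrite cardFi.
  (* [6 * a <= #|F| + 5] says that removing fewer than [2 * a] blocks from [F :\ i]
     leaves at least two thirds of them. *)
  by set m := #|F :\ i|; lia.
by rewrite disjoints_subset; apply/subsetP=> B; rewrite !inE negb_or => /andP[/andP[]].
Qed.

Lemma bs_promise : (exists x y, f x != f y) ->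
  exists P, Rq f P = 1 /\ ((bs f + 5) %/ 6)%:R <= R0q f P.
Proof.
move=> /bs_gt0 bs_gt0; set a := ((bs f + 5) %/ 6)%N.
have [x [F [sF cardF]]] := bs_attained f.
have a_gt0 : (0 < a)%N by rewrite /a; lia.
have aF : (6 * a <= #|F| + 5)%N by rewrite /a cardF; lia.
pose goodA T := [&& T \subset F, f (flip x (cover T)) != f x & (2 * #|F| <= 3 * #|T|)%N].
case: (boolP [forall Q : {set {set 'I_N}}, (Q \subset F) ==> (#|Q| < a)%N ==>
                [exists T, goodA T && [disjoint T & Q]]]) => [missA | /forallPn[Q0]].
  have [tF _ F0] := sensitive_familyP sF.
  apply: (@block_promise _ f x F goodA) => // [T /and3P[] // | Q QF Qa].
  by move/forallP/(_ Q): missA; rewrite QF Qa => /existsP[T /andP[]]; exists T.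
rewrite 2!negb_imply => /and3P[_ Q0a /existsPn noA].
have /subsetPn[i iF iQ0] : ~~ (F \subset Q0).
  by apply: contraTN Q0a => /subset_leq_card; rewrite -leqNgt; lia.
apply: (flipped_block_promise sF iF iQ0 Q0a aF) => T TF sizeT dTQ0.
by apply/eqP; move: (noA T); rewrite /goodA TF sizeT dTQ0 /= !andbT negbK.
Qed.

End BlockSensitivityPromise.

From mathcomp Require Import reals exp.

Lemma powR_expr_inv (K : realType) (a : K) n :
  0 <= a -> (a ^+ n.+1) `^ (n.+1%:R)^-1 = a.
Proof. by move=> a_ge0; rewrite -powR_mulrn // -powRrM mulfV ?pnatr_eq0 // powRr1. Qed.

Theorem theorem29 (N : nat) (f : input N -> bool) :
  (exists x y : input N, f x != f y) ->
  exists P : {set input N},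
    Rq f P = 1 /\ (R0q f [set: input N]) `^ (3^-1) / 6 <= R0q f P.
Proof.
move=> nonconst; have [P [RqP R0qP]] := bs_promise nonconst.
exists P; split=> //; apply: le_trans R0qP.
have R0q_ge0 : 0 <= R0q f [set: input N].
  exact: (@R0q_ge _ f _ [ffun=> false] 0 (in_setT _) (fun _ _ => leq0n _)).
have root_le : R0q f [set: input N] `^ 3^-1 <= (bs f)%:R.
  rewrite -[X in _ <= X](@powR_expr_inv _ _ 2 (ler0n _ (bs f))) -natrX.
  by apply: ge0_ler_powR; rewrite ?nnegrE ?invr_ge0 ?ler0n ?R0q_le_bs.
have : (bs f)%:R <= (6 * ((bs f + 5) %/ 6))%:R :> R by rewrite ler_nat; lia.
by rewrite natrM; lra.
Qed.
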